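(* Consider a homogeneous controlled queueing network $\{X_n,n\ge 0\}$ on $\mathcal{S}=\mathbb{Z}_+^M$ with action drift matrix $\mathbf{D}$. Suppose that $\mathrm{rank}(\mathbf{D})<M$ and that the following non-degeneracy condition holds: the system $\mathbf{D}\boldsymbol{\alpha}=\mathbf{0}$ has a solution $\boldsymbol{\alpha}\in\mathbb{R}^M$ such that for every $\mathbf{x}\in\mathcal{S}$ and every $a\in\mathcal{A}(\mathbf{x})$, $\mathbb{P}_a(\boldsymbol{\alpha}'X_1\neq\boldsymbol{\alpha}'\mathbf{x}\mid X_0=\mathbf{x})>0$. Then the network is non-stabilizable.
   Context: A homogeneous controlled queueing network is a controlled discrete-time Markov chain $\{X_n,n\ge0\}$ with state space $\mathcal{S}=\mathbb{Z}_+^M$. For each $\mathbf{z}\in\mathcal{S}$, $\mathcal{A}(\mathbf{z})$ is the set of actions available at $\mathbf{z}$, and $\mathcal{A}=\bigcup_{\mathbf{z}}\mathcal{A}(\mathbf{z})=\{a_1,\dots,a_L\}$ is finite. A (deterministic stationary) policy is a function $\mathcal{P}:\mathcal{S}\to\mathcal{A}$ with $\mathcal{P}(\mathbf{z})\in\mathcal{A}(\mathbf{z})$; under any policy $X_n\in\mathcal{S}$ for all $n$. When action $a$ is taken in state $\mathbf{z}$, transitions follow $\mathbb{P}_a(X_{n+1}=\cdot\mid X_n=\mathbf{z})$, and homogeneity means $\tilde P_a(\mathbf{x}):=\mathbb{P}_a(X_{n+1}-\mathbf{z}=\mathbf{x}\mid X_n=\mathbf{z})$ does not depend on $\mathbf{z}$.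 With $\mathbf{e}_i$ the canonical row vectors of $\mathbb{R}^M$, the set $\mathcal{D}=\{\mathbf{x}:\tilde P_a(\mathbf{x})>0\text{ for some }a\in\mathcal{A}\}$ consists only of vectors of the forms $\mathbf{e}_i$, $-\mathbf{e}_i$, or $\mathbf{e}_i-\mathbf{e}_j$ with $i\neq j$. The drift vector of action $a_i$ is $\boldsymbol{\Delta}_i=\mathbb{E}_{a_i}[X_{n+1}-X_n\mid X_n]=\sum_{\mathbf{x}}\mathbf{x}\,\tilde P_{a_i}(\mathbf{x})$, and the action drift matrix $\mathbf{D}$ is the $L\times M$ matrix with rows $\boldsymbol{\Delta}_i'$, $i=1,\dots,L$. The network is non-stabilizable if there is no policy under which the chain has a positive recurrent class that is reached with probability 1. *)

From HB Require Import structures.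
From mathcomp Require Import all_boot all_order all_algebra.
From mathcomp Require Import all_classical all_reals all_analysis.
Set Implicit Arguments. Unset Strict Implicit. Unset Printing Implicit Defensive.
Import Order.TTheory GRing.Theory Num.Theory.
Import numFieldNormedType.Exports.
Local Open Scope classical_set_scope.
Local Open Scope ring_scope.

Section QN.
Variables (R : realType) (M L : nat).

Definition state := {ffun 'I_M -> nat}.

(* Jumps: (Some i, None) = e_i ; (None, Some k) = -e_k ; (Some i, Some k) = e_i - e_k *)
Definition jump := (option 'I_M * option 'I_M)%type.

Definition valid_jump (j : jump) : bool :=
  match j with
  | (None, None) => false
  | (Some i, Some k) => i != k
  | _ => true
  end.

Definition jvec (j : jump) (i : 'I_M) : int :=
  (j.1 == Some i)%:Z - (j.2 == Some i)%:Z.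

(* the state z + jvec j (exact whenever the jump is feasible at z) *)
Definition move (z : state) (j : jump) : state :=
  [ffun i => absz ((z i)%:Z + jvec j i)].

(* actions are 'I_L = {a_1,...,a_L};  Pt a j = tilde P_a(jvec j);  Aset z = A(z) *)
Variables (Pt : 'I_L -> jump -> R) (Aset : state -> {set 'I_L}).

Definition qn_model : Prop :=
  [/\ (forall a j, 0 <= Pt a j),
      (forall a, \sum_(j : jump) Pt a j = 1),
      (forall a j, 0 < Pt a j -> valid_jump j),
      (forall z a j, a \in Aset z -> 0 < Pt a j -> forall i, 0 <= (z i)%:Z + jvec j i)
    & ((forall z, Aset z != finset.set0) /\ (forall a, exists z, a \in Aset z))].

Definition drift_matrix : 'M[R]_(L, M) :=
  \matrix_(a < L, i < M) \sum_(j : jump) Pt a j * (jvec j i)%:~R.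

Definition lin (alpha : 'cV[R]_M) (z : state) : R :=
  \sum_(i < M) alpha i ord0 * (z i)%:R.

Definition prob_change (alpha : 'cV[R]_M) (x : state) (a : 'I_L) : R :=
  \sum_(j : jump | lin alpha (move x j) != lin alpha x) Pt a j.

Definition policy := state -> 'I_L.

Definition admissible (pol : policy) : Prop := forall z, pol z \in Aset z.

Section Chain.
Variable pol : policy.

Fixpoint hit_within (C : set state) (n : nat) (z : state) : R :=
  match n with
  | 0 => if z \in C then 1 else 0
  | n'.+1 => if z \in C then 1
             else \sum_(j : jump) Pt (pol z) j * hit_within C n' (move z j)
  end.

Fixpoint first_visit (y : state) (n : nat) (z : state) : R :=
  match n with
  | 0 => if z == y then 1 else 0
  | n'.+1 => if z == y then 0
             else \sum_(j : jump) Pt (pol z) j * first_visit y n' (move z j)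
  end.

Definition first_return (y : state) (n : nat) : R :=
  match n with
  | 0 => 0
  | n'.+1 => \sum_(j : jump) Pt (pol y) j * first_visit y n' (move y j)
  end.

Definition pos_recurrent (y : state) : Prop :=
  ((fun N : nat => \sum_(n < N) first_return y n) @ \oo --> (1 : R)) /\
  cvgn (fun N : nat => \sum_(n < N) (n%:R * first_return y n)).

Definition reaches (y y' : state) : Prop := exists n, 0 < hit_within [set y'] n y.
Definition communicate (y y' : state) : Prop := reaches y y' /\ reaches y' y.

Definition pos_rec_class (C : set state) : Prop :=
  [/\ C !=set0,
      (forall y y', C y -> C y' -> communicate y y'),
      (forall y z, C y -> communicate y z -> C z)
    & (forall y, C y -> pos_recurrent y)].

Definition reached_as (C : set state) : Prop :=
  forall z, (fun n : nat => hit_within C n z) @ \oo --> (1 : R).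

End Chain.

Definition stabilizable : Prop :=
  exists pol : policy, admissible pol /\
    exists C : set state, pos_rec_class pol C /\ reached_as pol C.

Definition non_stabilizable : Prop := ~ stabilizable.

End QN.

(* The linear functional g z = alpha'(z - y) is a martingale under every policy, because
   D alpha = 0 says that every action has zero drift in the direction alpha, and its
   increments are bounded by K = sum_i |alpha_i|.  Optional stopping at the first visit to y
   before time k gives |g z| <= (|g z| + K k) P_z(y not hit within k).  By non-degeneracy
   the chain leaves y in one step, with positive probability, for a state z0 with
   g z0 <> 0, so the return time T to y satisfies P(T > k + 1) >= c / (k + 2) for some
   c > 0.  A finite mean return time forces n P(T >= n) -> 0, hence no state is positive
   recurrent under any admissible policy. *)
From HB Require Import structures.
From mathcomp Require Import all_boot all_order all_algebra.
From mathcomp Require Import all_classical all_reals all_analysis.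
From mathcomp Require Import ring lra.
Import Order.TTheory GRing.Theory Num.Theory.
Import numFieldNormedType.Exports.
Set Implicit Arguments. Unset Strict Implicit. Unset Printing Implicit Defensive.
Local Open Scope classical_set_scope.
Local Open Scope ring_scope.

Section FiniteMean.
Variables (R : realType) (f : nat -> R).
Hypothesis f_ge0 : forall n, 0 <= f n.

Lemma tail_mass_le_tail_moment m t :
  m%:R * (\sum_(n < m + t) f n - \sum_(n < m) f n) <=
  \sum_(n < m + t) n%:R * f n - \sum_(n < m) n%:R * f n.
Proof.
elim: t => [|t IHt]; first by rewrite addn0 !subrr mulr0.
rewrite addnS !big_ord_recr /= (addrAC _ (f _)) (addrAC _ (_ * f _)) mulrDr.
by apply: lerD => //; apply: ler_wpM2r => //; rewrite ler_nat leq_addr.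
Qed.

Lemma finite_mean_tail_small :
  (fun N : nat => \sum_(n < N) f n) @ \oo --> (1 : R) ->
  cvgn (fun N : nat => \sum_(n < N) (n%:R * f n)) ->
  forall eta, 0 < eta ->
  exists N, forall k, (N <= k)%N -> k%:R * (1 - \sum_(n < k) f n) < eta.
Proof.
move=> /cvgr_dist_lt mass_cvg /cvgr_dist_lt moment_cvg eta eta_gt0.
have [N _ moment_near] := moment_cvg (eta / 4) (divr_gt0 eta_gt0 (ltr0n _ 4)).
exists N => k Nk.
pose eps := eta / (2 * k.+1%:R).
have eps_gt0 : 0 < eps by rewrite divr_gt0 // mulr_gt0.
have [N' _ mass_near] := mass_cvg eps eps_gt0.
pose n := maxn N' k.
have kn : (k + (n - k))%N = n by rewrite subnKC // leq_maxr.
have tail := tail_mass_le_tail_moment k (n - k); rewrite kn in tail.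
have mass_n : 1 - \sum_(i < n) f i < eps.
  exact: le_lt_trans (ler_norm _) (mass_near n (leq_maxl _ _)).
have moment_n : \sum_(i < n) i%:R * f i - limn (fun N : nat => \sum_(i < N) i%:R * f i)
    < eta / 4.
  have := moment_near n (leq_trans Nk (leq_maxr _ _)).
  by rewrite distrC; exact: le_lt_trans (ler_norm _).
have moment_k : limn (fun N : nat => \sum_(i < N) i%:R * f i) - \sum_(i < k) i%:R * f i
    < eta / 4.
  exact: le_lt_trans (ler_norm _) (moment_near k Nk).
have eps_k : k.+1%:R * eps = eta / 2.
  by rewrite /eps; field; rewrite nat1r pnatr_eq0.
have k_ge0 : 0 <= k%:R :> R by [].
rewrite -natr1 in eps_k; nra.
Qed.

End FiniteMean.

Section StoppedMartingale.
Variables (R : realType) (M L : nat) (Pt : 'I_L -> jump M -> R) (pol : policy M L).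
Hypotheses (Pt_ge0 : forall a j, 0 <= Pt a j)
           (Pt_sum1 : forall a, \sum_(j : jump M) Pt a j = 1).

Lemma hit_within_bounds C n z : 0 <= hit_within Pt pol C n z <= 1.
Proof.
elim: n z => [|n IHn] z /=; case: ifP => _; rewrite ?lexx ?ler01 //.
have /all_and2[H_ge0 H_le1] := fun j => andP (IHn (move z j)).
rewrite sumr_ge0 => [|j _]; last exact: mulr_ge0.
rewrite -(Pt_sum1 (pol z)); apply: ler_sum => j _.
by rewrite ler_piMr.
Qed.

Lemma first_visit_ge0 y n z : 0 <= first_visit Pt pol y n z.
Proof.
elim: n z => [|n IHn] z /=; case: ifP => // _.
by apply: sumr_ge0 => j _; exact: mulr_ge0.
Qed.

Lemma first_return_ge0 y n : 0 <= first_return Pt pol y n.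
Proof.
case: n => //= n; apply: sumr_ge0 => j _; exact: mulr_ge0 (first_visit_ge0 _ _ _).
Qed.

Lemma hit_within_set1 y k z :
  hit_within Pt pol [set y] k z = \sum_(n < k.+1) first_visit Pt pol y n z.
Proof.
elim: k z => [|k IHk] z /=; first by rewrite big_ord1 /= in_set1.
rewrite big_ord_recl /= in_set1; case: eqP => [_|_]; first by rewrite big1 ?addr0.
rewrite add0r exchange_big /=; apply: eq_bigr => j _.
by rewrite IHk mulr_sumr.
Qed.

Lemma return_tail_escape y k :
  1 - \sum_(n < k.+2) first_return Pt pol y n =
  \sum_(j : jump M) Pt (pol y) j * (1 - hit_within Pt pol [set y] k (move y j)).
Proof.
rewrite big_ord_recl add0r.
under [in RHS]eq_bigr => j _ do rewrite hit_within_set1 mulrBr mulr1 mulr_sumr.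
by rewrite sumrB Pt_sum1 [in RHS]exchange_big.
Qed.

Definition harmonic (g : state M -> R) : Prop :=
  forall z, \sum_(j : jump M) Pt (pol z) j * g (move z j) = g z.

Lemma harmonicBr (g : state M -> R) c : harmonic g -> harmonic (fun z => g z - c).
Proof.
move=> gH z; under eq_bigr => j _ do rewrite mulrBr.
by rewrite sumrB -mulr_suml Pt_sum1 mul1r gH.
Qed.

Variables (g : state M -> R) (y : state M) (K : R).
Hypotheses (gH : harmonic g) (gy : g y = 0)
           (g_incr : forall z j, 0 < Pt (pol z) j -> `|g (move z j) - g z| <= K).

(* Optional stopping for g at the first visit to y, truncated at time k. *)
Lemma harmonic_le_escape k z :
  `|g z| <= (`|g z| + K * k%:R) * (1 - hit_within Pt pol [set y] k z).
Proof.
elim: k z => [|k IHk] z /=; rewrite in_set1; case: eqP => [->|_];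
  rewrite ?gy ?normr0 ?subrr ?mulr0 ?subr0 ?addr0 ?mulr1 //.
have escape_sum : 1 - \sum_(j : jump M) Pt (pol z) j * hit_within Pt pol [set y] k (move z j)
    = \sum_(j : jump M) Pt (pol z) j * (1 - hit_within Pt pol [set y] k (move z j)).
  by under [in RHS]eq_bigr => j _ do rewrite mulrBr mulr1; rewrite sumrB Pt_sum1.
rewrite escape_sum mulr_sumr -{1}gH.
apply: le_trans (ler_norm_sum _ _ _) (ler_sum _ _) => j _.
rewrite normrM ger0_norm // mulrCA.
have [<-|Pj_gt0] := eqVneq 0 (Pt (pol z) j); first by rewrite !mul0r.
have {}Pj_gt0 : 0 < Pt (pol z) j by rewrite lt_neqAle Pj_gt0 Pt_ge0.
apply: ler_wpM2l => //; apply: le_trans (IHk _) _.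
have /andP[_ H_le1] := hit_within_bounds [set y] k (move z j).
apply: ler_wpM2r; first by rewrite subr_ge0.
rewrite -natr1 mulrDr mulr1 addrA addrAC lerD2r.
have := ler_normD (g (move z j) - g z) (g z); have := g_incr Pj_gt0.
rewrite subrK; lra.
Qed.

Lemma return_tail_lower_bound j0 :
  0 < Pt (pol y) j0 -> g (move y j0) != 0 ->
  exists2 eta, 0 < eta &
    forall k, eta <= k.+2%:R * (1 - \sum_(n < k.+2) first_return Pt pol y n).
Proof.
move=> P0_gt0 gz0_neq0.
set p0 := Pt (pol y) j0; set d := `|g (move y j0)|.
have d_gt0 : 0 < d by rewrite normr_gt0.
have K_ge0 : 0 <= K.
  by apply: le_trans (g_incr P0_gt0); rewrite normr_ge0.
exists (p0 * d / (d + K)); first by rewrite !divr_gt0 ?mulr_gt0 ?ltr_wpDr.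
move=> k; rewrite ler_pdivrMr ?ltr_wpDr //.
set X := 1 - hit_within Pt pol [set y] k (move y j0).
set Y := 1 - _.
have stop_bound : d <= (d + K * k%:R) * X := harmonic_le_escape k (move y j0).
have X_ge0 : 0 <= X by rewrite subr_ge0; case/andP: (hit_within_bounds [set y] k (move y j0)).
have escape_j0 : p0 * X <= Y.
  rewrite /Y return_tail_escape (bigD1 j0) //= lerDl.
  apply: sumr_ge0 => j _; apply: mulr_ge0 => //.
  by rewrite subr_ge0; case/andP: (hit_within_bounds [set y] k (move y j)).
have p0_ge0 : 0 <= p0 := ltW P0_gt0.
have Y_ge0 : 0 <= Y := le_trans (mulr_ge0 p0_ge0 X_ge0) escape_j0.
have Z_ge0 : 0 <= d + K * k%:R by rewrite addr_ge0 ?mulr_ge0 // ltW.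
have Z_le : d + K * k%:R <= k.+2%:R * (d + K).
  have k_ge0 : 0 <= k%:R :> R by [].
  rewrite -!natr1; nra.
apply: le_trans (_ : p0 * ((d + K * k%:R) * X) <= _).
  exact: ler_wpM2l.
apply: le_trans (_ : _ <= (d + K * k%:R) * Y) _; first by rewrite mulrCA ler_wpM2l.
by rewrite mulrAC ler_wpM2r.
Qed.

Lemma harmonic_not_pos_recurrent j0 :
  0 < Pt (pol y) j0 -> g (move y j0) != 0 -> ~ pos_recurrent Pt pol y.
Proof.
move=> P0_gt0 gz0_neq0 [mass_cvg moment_cvg].
have [eta eta_gt0 tail_ge] := return_tail_lower_bound P0_gt0 gz0_neq0.
have [N tail_lt] :=
  finite_mean_tail_small (first_return_ge0 y) mass_cvg moment_cvg eta_gt0.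
by have := tail_lt N.+2 (leqW (leqnSn N)); rewrite ltNge tail_ge.
Qed.

End StoppedMartingale.

Section LinearFunctional.
Variables (R : realType) (M : nat) (alpha : 'cV[R]_M).

Lemma norm_jvec_le1 (j : jump M) i : `|(jvec j i)%:~R : R| <= 1.
Proof.
by rewrite /jvec; do 2!case: (_ == _); rewrite ?subrr ?subr0 ?sub0r ?normrN ?normr1 ?normr0.
Qed.

Lemma lin_moveE (z : state M) (j : jump M) :
  (forall i, 0 <= (z i)%:Z + jvec j i) ->
  lin alpha (move z j) = lin alpha z + \sum_(i < M) alpha i ord0 * (jvec j i)%:~R.
Proof.
move=> feasible; rewrite /lin -big_split; apply: eq_bigr => i _ /=.
have abs_cast : (absz ((z i)%:Z + jvec j i))%:R = ((z i)%:Z + jvec j i)%:~R :> R.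
  by rewrite -[LHS]/(((absz ((z i)%:Z + jvec j i))%:Z)%:~R) gez0_abs.
by rewrite ffunE -mulrDr abs_cast intrD.
Qed.

Lemma lin_move_incr (z : state M) (j : jump M) :
  (forall i, 0 <= (z i)%:Z + jvec j i) ->
  `|lin alpha (move z j) - lin alpha z| <= \sum_(i < M) `|alpha i ord0|.
Proof.
move=> feasible; rewrite lin_moveE // addrC addKr.
apply: le_trans (ler_norm_sum _ _ _) (ler_sum _ _) => i _.
by rewrite normrM ler_piMr ?norm_jvec_le1.
Qed.

Variables (L : nat) (Pt : 'I_L -> jump M -> R) (Aset : state M -> {set 'I_L}).

Lemma changing_jump_exists x a :
  0 < prob_change Pt alpha x a ->
  exists2 j, 0 < Pt a j & lin alpha (move x j) != lin alpha x.
Proof.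
move=> change_gt0.
have [j /andP[changes Pj_gt0]|none] :=
  pickP (fun j => (lin alpha (move x j) != lin alpha x) && (0 < Pt a j)).
  by exists j.
move: change_gt0; rewrite ltNge => /negP[]; apply: sumr_le0 => j changes.
by have := none j; rewrite changes /= leNgt => ->.
Qed.

Lemma lin_harmonic (pol : policy M L) :
  qn_model Pt Aset -> drift_matrix Pt *m alpha = 0 -> admissible Aset pol ->
  harmonic Pt pol (lin alpha).
Proof.
move=> [Pt_ge0 Pt_sum1 _ feasible _] zero_drift adm z.
have drift_a : \sum_(j : jump M) Pt (pol z) j * \sum_(i < M) alpha i ord0 * (jvec j i)%:~R = 0.
  have drift_entry : (drift_matrix Pt *m alpha) (pol z) ord0 = 0.
    by rewrite zero_drift mxE.
  rewrite -[RHS]drift_entry !mxE.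
  under eq_bigr => j _ do rewrite mulr_sumr.
  rewrite exchange_big; apply: eq_bigr => i _; rewrite mxE mulr_suml.
  by apply: eq_bigr => j _; rewrite mulrCA mulrC.
transitivity (\sum_(j : jump M)
    Pt (pol z) j * (lin alpha z + \sum_(i < M) alpha i ord0 * (jvec j i)%:~R)).
  apply: eq_bigr => j _.
  have [<-|Pj_neq0] := eqVneq 0 (Pt (pol z) j); first by rewrite !mul0r.
  have Pj_gt0 : 0 < Pt (pol z) j by rewrite lt_neqAle Pj_neq0 Pt_ge0.
  by rewrite lin_moveE // => i; exact: feasible (adm z) Pj_gt0 i.
under eq_bigr => j _ do rewrite mulrDr.
by rewrite big_split /= -mulr_suml Pt_sum1 mul1r drift_a addr0.
Qed.

End LinearFunctional.

Theorem theorem2 (R : realType) (M L : nat)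
  (Pt : 'I_L -> jump M -> R) (Aset : state M -> {set 'I_L}) :
  qn_model Pt Aset ->
  (\rank (drift_matrix Pt) < M)%N ->
  (exists alpha : 'cV[R]_M, drift_matrix Pt *m alpha = 0 /\
     (forall (x : state M) (a : 'I_L), a \in Aset x -> 0 < prob_change Pt alpha x a)) ->
  non_stabilizable Pt Aset.
Proof.
move=> model _ [alpha [zero_drift nondegenerate]].
move=> [pol [adm [C [[[y Cy] _ _ C_pos_rec] _]]]].
have [Pt_ge0 Pt_sum1 _ feasible _] := model.
have [j0 Pj0_gt0 j0_changes] := changing_jump_exists (nondegenerate y _ (adm y)).
apply: (harmonic_not_pos_recurrent Pt_ge0 Pt_sum1
          (g := fun z => lin alpha z - lin alpha y) (y := y)
          (K := \sum_(i < M) `|alpha i ord0|) _ _ _ Pj0_gt0 _ (C_pos_rec y Cy)).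
- exact: (harmonicBr Pt_sum1 (lin alpha y) (lin_harmonic model zero_drift adm)).
- by rewrite subrr.
- move=> z j Pj_gt0; rewrite opprB addrA subrK.
  by apply: lin_move_incr => i; exact: feasible (adm z) Pj_gt0 i.
- by rewrite subr_eq0.
Qed.
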